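(* Let $A,B,C$ be $N\times N$ real symmetric positive semidefinite matrices and $0\leq k\leq N$. Then \[ e_{k}(A)+e_{k}(B)+e_{k}(C)+e_{k}(A+B+C)\geq e_{k}(A+B)+e_{k}(B+C)+e_{k}(C+A), \] where $e_{k}(X)$ denotes the $k$-th elementary symmetric function of the eigenvalues of $X$. *)

From HB Require Import structures.
From mathcomp Require Import all_boot all_order all_algebra.
From Stdlib Require Import ClassicalEpsilon.
Set Implicit Arguments. Unset Strict Implicit. Unset Printing Implicit Defensive.
Import Order.TTheory GRing.Theory Num.Theory.
Local Open Scope ring_scope.

Definition psd {R : realFieldType} {N : nat} (A : 'M[R]_N) : Prop :=
  A^T = A /\ forall v : 'rV[R]_N, 0 <= (v *m A *m v^T) 0 0.

Definition is_eigen_seq {R : rcfType} {N : nat} (A : 'M[R]_N) (s : seq R) : Prop :=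
  char_poly A = \prod_(x <- s) ('X - x%:P).

(* a choice of the eigenvalue list (exists for real symmetric matrices) *)
Definition eigvals {R : rcfType} {N : nat} (A : 'M[R]_N) : seq R :=
  epsilon (inhabits [::]) (fun s => is_eigen_seq A s).

Definition esym {R : rcfType} (k : nat) (s : seq R) : R :=
  \sum_(I : {set 'I_(size s)} | #|I| == k) \prod_(i in I) s`_i.

Definition ek {R : rcfType} {N : nat} (k : nat) (X : 'M[R]_N) : R :=
  esym k (eigvals X).

From HB Require Import structures.
From mathcomp Require Import all_boot all_order all_algebra zify ring.
From mathcomp Require Import perm complex.
From Stdlib Require Import ClassicalEpsilon.
Set Implicit Arguments. Unset Strict Implicit. Unset Printing Implicit Defensive.
Import Order.TTheory GRing.Theory Num.Theory.
Local Open Scope ring_scope.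

(* Factor A = P P^T, B = Q Q^T, C = S S^T and put W = [P Q S]. For a union X
   of the three column blocks, the matching partial sum of A, B, C is
   W D_X W^T, with D_X the 0/1 diagonal indicator of X. By Sylvester's
   identity, e_k(W D_X W^T) = e_k(D_X W^T W D_X), the sum of the principal
   k-minors of the Gram matrix W^T W over the k-sets T contained in X. These
   minors are nonnegative, so for each T it remains to check
   [T ⊆ A] + [T ⊆ B] + [T ⊆ C] + 1 >= [T ⊆ A ∪ B] + [T ⊆ B ∪ C] + [T ⊆ C ∪ A]
   for the blocks A, B, C; it holds since [T ⊆ A] = [T ⊆ A ∪ B] [T ⊆ C ∪ A],
   and so on. *)

Section PrincipalMinors.
Variables (R : comNzRingType) (n : nat).
Implicit Types (M : 'M[R]_n) (S T : {set 'I_n}).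

(* [\det (mask_mx S M)] is the principal minor of [M] on [S]: the rows
   outside [S] are replaced by rows of the identity. *)
Definition mask_mx S M : 'M[R]_n :=
  \matrix_(i, j) if i \in S then M i j else (i == j)%:R.

Lemma eq_det_mask_mx S M M' : {in S &, forall i j, M i j = M' i j} ->
  \det (mask_mx S M) = \det (mask_mx S M').
Proof.
move=> eqM; apply: eq_bigr => s _; congr (_ * _).
have [/forallP fixS | /forallPn [i /[!negb_imply] /andP [iS /negbTE si]]] :=
  boolP [forall i, (i \notin S) ==> (s i == i)].
  apply: eq_bigr => i _; rewrite !mxE; case: ifP => // iS; apply: eqM => //.
  apply: contraT => siS; have /eqP/perm_inj si := implyP (fixS (s i)) siS.
  by rewrite -si (negbTE siS) in iS.
by rewrite (bigD1 i) //= [RHS](bigD1 i) //= !mxE (negbTE iS) eq_sym si !mul0r.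
Qed.

Lemma det_mask_mx_row0 S M i : i \in S -> (forall j, M i j = 0) ->
  \det (mask_mx S M) = 0.
Proof.
move=> iS Mi0; apply: big1 => s _.
by rewrite (bigD1 i) //= mxE iS Mi0 mul0r mulr0.
Qed.

Lemma det_mask_mx_opp S M : \det (mask_mx S (- M)) = (-1) ^+ #|S| * \det (mask_mx S M).
Proof.
have -> : mask_mx S (- M) =
    diag_mx (\row_i (if i \in S then -1 else 1)) *m mask_mx S M.
  by apply/matrixP => i j; rewrite mul_diag_mx !mxE; case: (i \in S); rewrite ?mulN1r ?mul1r.
rewrite det_mulmx det_diag (eq_bigr _ (fun i _ => mxE _ _ _ _)) /=.
by rewrite -big_mkcond prodr_const.
Qed.

Lemma det_add_diag_mx M (d : 'rV[R]_n) :
  \det (M + diag_mx d) = \sum_S (\prod_(i in ~: S) d 0 i) * \det (mask_mx S M).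
Proof.
have expand (s : 'S_n) : \prod_i (M + diag_mx d) i (s i) =
    \sum_S (\prod_(i in ~: S) d 0 i) * \prod_i mask_mx S M i (s i).
  rewrite (eq_bigr (fun i => M i (s i) + d 0 i *+ (i == s i))); last first.
    by move=> i _; rewrite !mxE.
  rewrite bigA_distr; apply: eq_bigr => S _.
  rewrite [\prod_(i in ~: S) _]big_mkcond -big_split /=; apply: eq_bigr => i _.
  by rewrite !mxE in_setC; case: (i \in S); rewrite ?mul1r ?mulr_natr.
rewrite /(\det _) (eq_bigr _ (fun s _ => congr1 _ (expand s))).
under eq_bigr do rewrite mulr_sumr.
rewrite exchange_big; apply: eq_bigr => S _; rewrite mulr_sumr.
by apply: eq_bigr => s _; rewrite mulrCA.
Qed.

End PrincipalMinors.

Section CharEsym.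
Variables (R : comNzRingType) (n : nat).

(* Only meaningful for [k <= n]: the subtraction [n - k] is truncated. *)
Definition char_esym k (M : 'M[R]_n) : R := (-1) ^+ k * (char_poly M)`_(n - k).

Lemma char_esym_minors k (M : 'M[R]_n) : (k <= n)%N ->
  char_esym k M = \sum_(S : {set 'I_n} | #|S| == k) \det (mask_mx S M).
Proof.
move=> kn; rewrite /char_esym.
have -> : char_poly M = \det (map_mx polyC (- M) + diag_mx (const_mx 'X)).
  by rewrite diag_const_mx /char_poly /char_poly_mx raddfN addrC.
rewrite det_add_diag_mx coef_sum mulr_sumr [RHS]big_mkcond /=.
apply: eq_bigr => S _; rewrite (eq_bigr _ (fun i _ => mxE _ _ _ _)) prodr_const.
have -> : mask_mx S (map_mx polyC (- M)) = map_mx polyC (mask_mx S (- M)).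
  by apply/matrixP => i j; rewrite !mxE; case: (i \in S); rewrite ?rmorph_nat.
rewrite det_map_mx coefMC coefXn det_mask_mx_opp.
have Sn : (#|S| <= n)%N by rewrite -[X in (_ <= X)%N]card_ord max_card.
have -> : #|~: S| = (n - #|S|)%N by rewrite cardsCs card_ord setCK.
have [<-|Sk] := eqVneq #|S| k.
  by rewrite eqxx mul1r signrMK.
rewrite (_ : (n - k == n - #|S|)%N = false) ?mul0r ?mulr0 //.
by apply/negbTE; apply: contra Sk => /eqP ?; apply/eqP; lia.
Qed.

End CharEsym.

(* Sylvester's determinant identity, from the two block eliminations of
   [[1, X], [Y, 'X]]. *)
Lemma char_poly_mulmxC (R : comNzRingType) n m (X : 'M[R]_(n, m)) (Y : 'M[R]_(m, n)) :
  char_poly (Y *m X) * 'X^n = char_poly (X *m Y) * 'X^m.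
Proof.
pose Xp := map_mx polyC X; pose Yp := map_mx polyC Y.
pose M := block_mx 1%:M Xp Yp ('X%:M : 'M_m).
have elimL : block_mx 1%:M 0 (- Yp) 1%:M *m M = block_mx 1%:M Xp 0 (char_poly_mx (Y *m X)).
  rewrite mulmx_block !mul1mx !mul0mx !addr0 mulmx1 mulNmx addNr.
  by rewrite /char_poly_mx map_mxM addrC.
have elimR : M *m block_mx 'X%:M 0 (- Yp) 1%:M = block_mx (char_poly_mx (X *m Y)) Xp 0 'X%:M.
  rewrite mulmx_block !mul1mx !mulmx0 !mulmx1 !add0r !mulmxN mul_mx_scalar mul_scalar_mx addrN.
  by rewrite /char_poly_mx map_mxM.
have := congr1 determinant elimL; have := congr1 determinant elimR.
rewrite !det_mulmx !det_lblock !det_ublock !det1 !mul1r !mulr1 !det_scalar => eR eL.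
by rewrite /char_poly -eL.
Qed.

Lemma char_esym_mulmxC (R : comNzRingType) n m (X : 'M[R]_(n, m)) (Y : 'M[R]_(m, n)) k :
  (k <= n)%N -> (k <= m)%N -> char_esym k (X *m Y) = char_esym k (Y *m X).
Proof.
move=> kn km; rewrite /char_esym; congr (_ * _).
have := congr1 (coefp (n + m - k)) (char_poly_mulmxC X Y); rewrite /= !coefMXn.
have /negbTE -> : ~~ (n + m - k < n)%N by rewrite -leqNgt; lia.
have /negbTE -> : ~~ (n + m - k < m)%N by rewrite -leqNgt; lia.
by rewrite (subnAC _ k n) (subnAC _ k m) addKn addnK => ->.
Qed.

Section DiagIndicator.
Variables (R : comNzRingType) (m : nat).
Implicit Types (K T : {set 'I_m}) (G : 'M[R]_m).

Definition diag_ind K : 'M[R]_m := diag_mx (\row_i (i \in K)%:R).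

Lemma tr_diag_ind K : (diag_ind K)^T = diag_ind K.
Proof. exact: tr_diag_mx. Qed.

Lemma diag_ind_idem K : diag_ind K *m diag_ind K = diag_ind K.
Proof.
rewrite mulmx_diag; congr diag_mx; apply/rowP => i.
by rewrite !mxE; case: (i \in K); rewrite ?mulr1 ?mulr0.
Qed.

Lemma diag_ind_conjE K G i j :
  (diag_ind K *m G *m diag_ind K) i j = (i \in K)%:R * G i j * (j \in K)%:R.
Proof. by rewrite mul_mx_diag mul_diag_mx !mxE. Qed.

Lemma det_mask_mx_diag_ind K G T :
  \det (mask_mx T (diag_ind K *m G *m diag_ind K)) = (T \subset K)%:R * \det (mask_mx T G).
Proof.
have [/subsetP TK | /subsetPn [i iT iK]] := boolP (T \subset K).
  rewrite mul1r; apply: eq_det_mask_mx => i j iT jT.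
  by rewrite diag_ind_conjE !TK // mulr1 mul1r.
by rewrite mul0r (det_mask_mx_row0 iT) // => j; rewrite diag_ind_conjE (negbTE iK) !mul0r.
Qed.

End DiagIndicator.
Arguments diag_ind {R m} K.

Lemma trmx_gram_diag_ind (R : comNzRingType) N m (W : 'M[R]_(N, m)) (K : {set 'I_m}) :
  (W *m diag_ind K *m W^T)^T = W *m diag_ind K *m W^T.
Proof. by rewrite !trmx_mul trmxK tr_diag_ind mulmxA. Qed.

Lemma char_esym_gram_diag_ind (R : comNzRingType) N m (W : 'M[R]_(N, m)) (K : {set 'I_m}) k :
  (k <= N)%N -> (k <= m)%N ->
  char_esym k (W *m diag_ind K *m W^T) =
  \sum_(T : {set 'I_m} | #|T| == k) (T \subset K)%:R * \det (mask_mx T (W^T *m W)).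
Proof.
move=> kN km.
rewrite -diag_ind_idem mulmxA -(mulmxA _ (diag_ind K)) char_esym_mulmxC //.
rewrite char_esym_minors //; apply: eq_bigr => T _.
by rewrite mulmxA -(mulmxA _ W^T) det_mask_mx_diag_ind.
Qed.

Lemma char_poly_similar (F : fieldType) n (P D : 'M[F]_n) : P \in unitmx ->
  char_poly (invmx P *m D *m P) = char_poly D.
Proof.
move=> Pu; rewrite /char_poly /char_poly_mx.
rewrite {1}(_ : 'X%:M = map_mx polyC (invmx P) *m 'X%:M *m map_mx polyC P); last first.
  by rewrite mul_mx_scalar -scalemxAl -map_mxM mulVmx // map_mx1 scalemx1.
rewrite !map_mxM -mulmxBl -mulmxBr !det_mulmx !det_map_mx mulrC mulrA -rmorphM.
by rewrite -det_mulmx mulmxV // det1 mul1r.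
Qed.

Section RealSymmetric.
Variables (R : rcfType) (n : nat).
Implicit Types (A : 'M[R]_n) (s : seq R).

(* The spectral theorem, applied to the complexification of [A]. *)
Lemma sym_eigen_seq A : A^T = A -> exists s, is_eigen_seq A s.
Proof.
move=> At; pose f := real_complex R; pose Ac := map_mx f A.
have Ah : Ac \is hermsymmx.
  apply: realsym_hermsym; last by apply/mxOverP => i j; rewrite mxE complex_real.
  by apply/is_hermitianmxP; rewrite expr0 scale1r map_mx_id // /Ac map_trmx At.
pose d := spectral_diag Ac; have d_real : d \is a realmx := hermitian_spectral_diag_real Ah.
exists [seq complex.Re (d 0 i) | i <- enum 'I_n].
apply: (@map_poly_inj _ _ f); rewrite map_char_poly.
rewrite -/Ac (orthomx_spectralP (hermitian_normalmx Ah)) char_poly_similar ?spectral_unit //.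
rewrite char_poly_trig ?diag_mx_is_trig // rmorph_prod big_map big_enum /=.
apply: eq_bigr => i _; rewrite map_polyXsubC /= mxE eqxx mulr1n.
by rewrite RRe_real // (mxOverP d_real).
Qed.

Lemma eigvalsP A : A^T = A -> is_eigen_seq A (eigvals A).
Proof. by move/sym_eigen_seq => exs; apply: epsilon_spec. Qed.

Lemma size_eigen_seq A s : is_eigen_seq A s -> size s = n.
Proof. by move=> As; have := size_char_poly A; rewrite As size_prod_XsubC => -[]. Qed.

Lemma ek_char_esym k A : A^T = A -> (k <= n)%N -> ek k A = char_esym k A.
Proof.
move=> /eigvalsP As kn; rewrite /char_esym As coef_prod_XsubC (size_eigen_seq As) ?leq_subr //.
rewrite subKn // signrMK /ek /esym.
by move: (eigvals A) (size_eigen_seq As) => s sz; case: n / sz.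
Qed.

Lemma psd_eigen_seq_ge0 A s x : psd A -> is_eigen_seq A s -> x \in s -> 0 <= x.
Proof.
move=> [_ Aq] As xs.
have : eigenvalue A x by rewrite eigenvalue_root_char As root_prod_XsubC.
move=> /eigenvalueP [v vA v0]; have := Aq v; rewrite vA -scalemxAl mxE.
suff vv : 0 < (v *m v^T) 0 0 by rewrite pmulr_lge0.
have [j vj] : exists j, v 0 j != 0.
  apply/existsP; apply: contraR v0; rewrite negb_exists => /forallP v0.
  by apply/eqP/rowP => j; rewrite mxE; apply/eqP/negPn.
rewrite mxE (bigD1 j) //= ltr_pwDl ?sumr_ge0 // => [|i _]; rewrite !mxE -expr2.
  by rewrite lt_def sqrf_eq0 vj sqr_ge0.
exact: sqr_ge0.
Qed.

Lemma psd_det_ge0 A : psd A -> 0 <= \det A.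
Proof.
move=> Apsd; have [s As] := sym_eigen_seq Apsd.1.
have := char_poly_det A; rewrite As coef0_prod_XsubC (size_eigen_seq As).
move=> /(can_inj (signrMK n)) <-.
by rewrite big_seq prodr_ge0 // => x /(psd_eigen_seq_ge0 Apsd As).
Qed.

End RealSymmetric.

Lemma mulmx11E (R : pzSemiRingType) (X Y : 'M[R]_1) : (X *m Y) 0 0 = X 0 0 * Y 0 0.
Proof. by rewrite mxE big_ord1. Qed.

Section PsdBlock.
Variables (R : rcfType) (n : nat) (a : R) (b : 'rV[R]_n) (d : 'M[R]_n).
Let A := block_mx a%:M b b^T d.

Lemma block_quad x v : (row_mx x%:M v *m A *m (row_mx x%:M v)^T) 0 0 =
  x * x * a + 2 * x * (b *m v^T) 0 0 + (v *m d *m v^T) 0 0.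
Proof.
rewrite mul_row_block tr_row_mx mul_row_col tr_scalar_mx !mul_scalar_mx !mul_mx_scalar.
rewrite !mulmxDl -!scalemxAl !mxE eqxx mulr1n.
have -> : \sum_j v 0 j * b^T j 0 = \sum_j b 0 j * v^T j 0.
  by apply: eq_bigr => j _; rewrite !mxE mulrC.
ring.
Qed.

Hypothesis Apsd : psd A.

Lemma psd_block_corner_ge0 : 0 <= a.
Proof.
have := Apsd.2 (row_mx 1%:M 0); rewrite block_quad trmx0 !mulmx0 !mxE.
by rewrite mulr0 !addr0 !mul1r.
Qed.

Lemma psd_block_corner0 : a = 0 -> b = 0.
Proof.
move=> a0; set beta := (b *m b^T) 0 0.
have beta_sum : beta = \sum_j b 0 j ^+ 2.
  by rewrite /beta mxE; apply: eq_bigr => j _; rewrite mxE -expr2.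
suff beta0 : beta = 0.
  apply/rowP => j; rewrite mxE; apply/eqP; rewrite -sqrf_eq0; apply/eqP.
  by move: beta0; rewrite beta_sum => /psumr_eq0P; apply => // i _; apply: sqr_ge0.
apply: contra_eq (ler0N1 R) => beta_neq0; set gam := (b *m d *m b^T) 0 0.
(* For [a = 0] the quadratic form is affine in [x] along [(x, b)], with slope
   [2 beta], so it reaches [-1]. *)
have := Apsd.2 (row_mx (- (gam + 1) / (2 * beta))%:M b); rewrite block_quad a0 -/beta -/gam.
rewrite (_ : _ + _ + gam = -1) => [->//|].
by field.
Qed.

Lemma psd_schur_complement : psd (d - a^-1 *: (b^T *m b)).
Proof.
have dT : d^T = d by rewrite -[d](block_mxKdr a%:M b b^T) trmx_drsub -/A Apsd.1.
split=> [|v]; first by rewrite linearB linearZ /= trmx_mul trmxK dT.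
set beta := (b *m v^T) 0 0; set gam := (v *m d *m v^T) 0 0.
have -> : (v *m (d - a^-1 *: (b^T *m b)) *m v^T) 0 0 = gam - a^-1 * beta ^+ 2.
  rewrite mulmxBr mulmxBl -scalemxAr -scalemxAl -/gam !mulmxA -(mulmxA _ b).
  have subZ00 (X Y : 'M[R]_1) c : (X - c *: Y) 0 0 = X 0 0 - c * Y 0 0 by rewrite !mxE.
  rewrite subZ00 mulmx11E -/beta expr2.
  by rewrite -[v *m b^T]trmxK trmx_mul !trmxK [_^T 0 0]mxE.
(* [x = - beta / a] minimizes the quadratic form along [(x, v)]; for [a = 0]
   the junk value [0^-1 = 0] still gives the right bound. *)
have := Apsd.2 (row_mx (- (a^-1 * beta))%:M v); rewrite block_quad -/beta -/gam.
have aVVa : a^-1 * a^-1 * a = a^-1.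
  by have [->|a0] := eqVneq a 0; rewrite ?invr0 ?mul0r // -mulrA mulVf ?mulr1.
have -> : - (a^-1 * beta) * - (a^-1 * beta) * a + 2 * - (a^-1 * beta) * beta + gam
    = gam - a^-1 * beta ^+ 2 + beta ^+ 2 * (a^-1 * a^-1 * a - a^-1) by ring.
by rewrite aVVa subrr mulr0 addr0.
Qed.

Lemma psd_block_factor (P' : 'M[R]_n) : d - a^-1 *: (b^T *m b) = P' *m P'^T ->
  exists P : 'M[R]_(1 + n), A = P *m P^T.
Proof.
move=> SP; pose r := Num.sqrt a.
have rr : r * r = a by rewrite -expr2 sqr_sqrtr // psd_block_corner_ge0.
have rVb : r * r^-1 *: b = b.
  have [a0|] := eqVneq a 0; first by rewrite (psd_block_corner0 a0) scaler0.
  by rewrite -rr mulf_eq0 orbb => r0; rewrite mulfV // scale1r.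
exists (block_mx r%:M 0 (r^-1 *: b^T) P').
rewrite /A tr_block_mx mulmx_block !trmx0 !mulmx0 !addr0 !tr_scalar_mx linearZ /= trmxK.
congr block_mx.
- by rewrite -scalar_mxM rr.
- by rewrite mul0mx addr0 mul_scalar_mx scalerA rVb.
- by rewrite -scalemxAl mul_mx_scalar scalerA mulrC -{1}rVb linearZ.
- by rewrite -SP -scalemxAl -scalemxAr scalerA -invfM rr addrC subrK.
Qed.

End PsdBlock.

Lemma psd_factor (R : rcfType) n (A : 'M[R]_n) : psd A -> exists P : 'M[R]_n, A = P *m P^T.
Proof.
elim: n A => [|n IH] A Apsd; first by exists 0; apply/matrixP => [[]].
move: A Apsd; rewrite -[n.+1]/(1 + n)%N => A Apsd.
have Ablock : A = block_mx (ulsubmx A 0 0)%:M (ursubmx A) (ursubmx A)^T (drsubmx A).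
  by rewrite -{1}[A]submxK -mx11_scalar trmx_ursub Apsd.1.
rewrite Ablock in Apsd *; have [P' SP] := IH _ (psd_schur_complement Apsd).
exact: (psd_block_factor (a := ulsubmx A 0 0) Apsd SP).
Qed.

Lemma psd_gram (R : rcfType) n m (Y : 'M[R]_(n, m)) : psd (Y *m Y^T).
Proof.
split=> [|v]; first by rewrite trmx_mul trmxK.
rewrite mulmxA -mulmxA -trmx_mul mxE.
by apply: sumr_ge0 => i _; rewrite !mxE -expr2 sqr_ge0.
Qed.

Lemma psd_add (R : rcfType) n (X Y : 'M[R]_n) : psd X -> psd Y -> psd (X + Y).
Proof.
move=> [XT Xq] [YT Yq]; split=> [|v]; first by rewrite linearD /= XT YT.
by rewrite mulmxDr mulmxDl mxE addr_ge0.
Qed.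

Lemma mask_mx_diag_ind (R : comNzRingType) m (T : {set 'I_m}) (G : 'M[R]_m) :
  mask_mx T (diag_ind T *m G *m diag_ind T) = diag_ind T *m G *m diag_ind T + diag_ind (~: T).
Proof.
apply/matrixP => i j; rewrite [LHS]mxE [RHS]mxE diag_ind_conjE !mxE in_setC.
by case: (i \in T); rewrite ?mul0r ?mul0rn ?addr0 ?add0r.
Qed.

Lemma det_mask_gram_ge0 (R : rcfType) N m (W : 'M[R]_(N, m)) (T : {set 'I_m}) :
  0 <= \det (mask_mx T (W^T *m W)).
Proof.
have := det_mask_mx_diag_ind T (W^T *m W) T; rewrite subxx mul1r => <-.
rewrite mask_mx_diag_ind.
apply/psd_det_ge0/psd_add.
  have -> : diag_ind T *m (W^T *m W) *m diag_ind T =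
            (diag_ind T *m W^T) *m (diag_ind T *m W^T)^T.
    by rewrite trmx_mul trmxK tr_diag_ind !mulmxA.
  exact: psd_gram.
by rewrite -diag_ind_idem -{2}tr_diag_ind; apply: psd_gram.
Qed.

Section ThreeBlocks.
Context {p q r : nat}.

Definition block3 (ca cb cc : bool) : {set 'I_(p + q + r)} :=
  [set i | if split i is inl j then (if split j is inl _ then ca else cb) else cc].

Lemma block3I ca cb cc ca' cb' cc' :
  block3 ca cb cc :&: block3 ca' cb' cc' = block3 (ca && ca') (cb && cb') (cc && cc').
Proof. by apply/setP => i; rewrite !inE; case: split => [j|//]; case: split. Qed.

Lemma block3T : block3 true true true = setT.
Proof. by apply/setP => i; rewrite !inE; case: split => [j|//]; case: split. Qed.

Lemma gram_block3 (R : comNzRingType) N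
    (P : 'M[R]_(N, p)) (Q : 'M[R]_(N, q)) (S : 'M[R]_(N, r)) ca cb cc :
  row_mx (row_mx P Q) S *m diag_ind (block3 ca cb cc) *m (row_mx (row_mx P Q) S)^T =
  ca%:R *: (P *m P^T) + cb%:R *: (Q *m Q^T) + cc%:R *: (S *m S^T).
Proof.
have -> : diag_ind (block3 ca cb cc) =
    block_mx (block_mx (ca%:R)%:M 0 0 (cb%:R)%:M) 0 0 (cc%:R)%:M :> 'M[R]_(p + q + r).
  rewrite -!diag_const_mx -!diag_mx_row; congr diag_mx; apply/rowP => i; rewrite !mxE inE.
  by case: split => [j|k]; rewrite !mxE //; case: split => ?; rewrite mxE.
rewrite !mul_row_block !mulmx0 !addr0 !add0r !tr_row_mx !mul_row_col !mul_mx_scalar.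
by rewrite -!scalemxAl.
Qed.

End ThreeBlocks.

Lemma subset_pairwiseI_leq (aT : finType) (T X Y Z : {set aT}) :
  ((T \subset X) + (T \subset Y) + (T \subset Z) <=
   (T \subset X :&: Z) + (T \subset X :&: Y) + (T \subset Y :&: Z) + 1)%N.
Proof. by rewrite !subsetI; case: (T \subset X); case: (T \subset Y); case: (T \subset Z). Qed.

Theorem lemma5p4 (R : rcfType) (N : nat) (A B C : 'M[R]_N) (k : nat) :
  psd A -> psd B -> psd C -> (k <= N)%N ->
  ek k A + ek k B + ek k C + ek k (A + B + C)
    >= ek k (A + B) + ek k (B + C) + ek k (C + A).
Proof.
move=> psdA psdB psdC kN.
have [P ->] := psd_factor psdA; have [Q ->] := psd_factor psdB; have [S ->] := psd_factor psdC.
set W := row_mx (row_mx P Q) S; set G := W^T *m W.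
have ekE (ca cb cc : bool) :
    ek k (ca%:R *: (P *m P^T) + cb%:R *: (Q *m Q^T) + cc%:R *: (S *m S^T)) =
    \sum_(T : {set 'I_(N + N + N)} | #|T| == k)
      (T \subset block3 ca cb cc)%:R * \det (mask_mx T G).
  rewrite -gram_block3 ek_char_esym ?char_esym_gram_diag_ind //; first by lia.
  exact: trmx_gram_diag_ind.
have := ekE true false false; have := ekE false true false; have := ekE false false true.
have := ekE true true false; have := ekE false true true; have := ekE true false true.
have := ekE true true true.
rewrite !scale1r !scale0r !addr0 !add0r [S *m S^T + _]addrC => -> -> -> -> -> -> ->.
rewrite -subr_ge0 -!big_split -sumrB /=; apply: sumr_ge0 => T _.
rewrite -!mulrDl -mulrBl mulr_ge0 ?det_mask_gram_ge0 // subr_ge0.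
rewrite block3T subsetT -(block3I true true false true false true).
rewrite -(block3I true true false false true true) -(block3I false true true true false true).
by rewrite -!natrD ler_nat subset_pairwiseI_leq.
Qed.
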